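(* Let $A$ be an algebra over a field $k$ of characteristic $0$ with a double bracket $\{\!\{-,-\}\!\}$, associated bracket $\{a,b\}=\{\!\{a,b\}\!\}'\{\!\{a,b\}\!\}''$, and associated tri-ary operation $\{\!\{-,-,-\}\!\}$. Then for all $a,b,c\in A$ the following identity holds in $A\otimes A$: \[\{a,\{\!\{b,c\}\!\}\}-\{\!\{\{a,b\},c\}\!\}-\{\!\{b,\{a,c\}\}\!\}=(m\otimes1)\{\!\{a,b,c\}\!\}-(1\otimes m)\{\!\{b,a,c\}\!\},\] where $m$ is multiplication of $A$ and $\{a,-\}$ acts on tensors by $\{a,u\otimes v\}=\{a,u\}\otimes v+u\otimes\{a,v\}$.
   Context: Unadorned tensor products are over $k$; $x\in V\otimes W$ is written $x'\otimes x''$ (summation suppressed), $x^\circ=x''\otimes x'$, and $\tau_s(a_1\otimes\cdots\otimes a_n)=a_{s^{-1}(1)}\otimes\cdots\otimes a_{s^{-1}(n)}$ for $s\in S_n$. A double bracket on $A$ is a bilinear map $\{\!\{-,-\}\!\}:A\times A\to A\otimes A$ with $\{\!\{a,bc\}\!\}=b\{\!\{a,c\}\!\}+\{\!\{a,b\}\!\}c$ (outer bimodule structure $b(x\otimes y)c=bx\otimes yc$) and $\{\!\{a,b\}\!\}=-\{\!\{b,a\}\!\}^\circ$. For $a\in A$, $b=b_1\otimes\cdots\otimes b_n$, $\{\!\{a,b\}\!\}_L=\{\!\{a,b_1\}\!\}\otimes b_2\otimes\cdots\otimes b_n$. The associated tri-ary operation is $\{\!\{a,b,c\}\!\}=\{\!\{a,\{\!\{b,c\}\!\}\}\!\}_L+\tau_{(123)}\{\!\{b,\{\!\{c,a\}\!\}\}\!\}_L+\tau_{(132)}\{\!\{c,\{\!\{a,b\}\!\}\}\!\}_L$.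 *)

(* Tensor products over k are modelled concretely as
   formal k-linear combinations of pure tensors (the free k-module
   {malg k[A*A]} on A*A, resp. on A*A*A) modulo the k-submodule generated
   by the (bi/tri)linearity relations; equality in A (x) A is the
   relation [teq2] below, equality in A (x) A (x) A is [teq3]. *)
From HB Require Import structures.
From mathcomp Require Import all_boot all_order all_algebra.
From mathcomp Require Import finmap.
From mathcomp.multinomials Require Import monalg.
Set Implicit Arguments. Unset Strict Implicit. Unset Printing Implicit Defensive.
Import GRing.Theory.
Local Open Scope ring_scope.

Section Tensor.
Variables (k : fieldType) (A : algType k).

Definition T2 := {malg k[(A * A)%type]}.
Definition T3 := {malg k[(A * A * A)%type]}.

Definition tens2 (a b : A) : T2 := << (a, b) >>.
Definition tens3 (a b c : A) : T3 := << (a, b, c) >>.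

Inductive null2 : T2 -> Prop :=
| null2_addl a a' b : null2 (tens2 (a + a') b - tens2 a b - tens2 a' b)
| null2_addr a b b' : null2 (tens2 a (b + b') - tens2 a b - tens2 a b')
| null2_scalel (r : k) a b : null2 (tens2 (r *: a) b - r *: tens2 a b)
| null2_scaler (r : k) a b : null2 (tens2 a (r *: b) - r *: tens2 a b)
| null2_0 : null2 0
| null2_add x y : null2 x -> null2 y -> null2 (x + y)
| null2_scale (r : k) x : null2 x -> null2 (r *: x).

Inductive null3 : T3 -> Prop :=
| null3_add1 a a' b c : null3 (tens3 (a + a') b c - tens3 a b c - tens3 a' b c)
| null3_add2 a b b' c : null3 (tens3 a (b + b') c - tens3 a b c - tens3 a b' c)
| null3_add3 a b c c' : null3 (tens3 a b (c + c') - tens3 a b c - tens3 a b c')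
| null3_scale1 (r : k) a b c : null3 (tens3 (r *: a) b c - r *: tens3 a b c)
| null3_scale2 (r : k) a b c : null3 (tens3 a (r *: b) c - r *: tens3 a b c)
| null3_scale3 (r : k) a b c : null3 (tens3 a b (r *: c) - r *: tens3 a b c)
| null3_0 : null3 0
| null3_add x y : null3 x -> null3 y -> null3 (x + y)
| null3_scale (r : k) x : null3 x -> null3 (r *: x).

Definition teq2 (x y : T2) : Prop := null2 (x - y).
Definition teq3 (x y : T3) : Prop := null3 (x - y).

Definition lin2 (W : lmodType k) (f : A -> A -> W) (x : T2) : W :=
  \sum_(p <- msupp x) x@_p *: f p.1 p.2.
Definition lin3 (W : lmodType k) (f : A -> A -> A -> W) (x : T3) : W :=
  \sum_(p <- msupp x) x@_p *: f p.1.1 p.1.2 p.2.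

Definition bimod2 (b : A) (x : T2) (c : A) : T2 :=
  lin2 (fun u v => tens2 (b * u) (v * c)) x.
Definition swap2 (x : T2) : T2 := lin2 (fun u v => tens2 v u) x.
Definition mult2 (x : T2) : A := lin2 (fun u v => u * v) x.
Definition mult12 (x : T3) : T2 := lin3 (fun u v w => tens2 (u * v) w) x.
Definition mult23 (x : T3) : T2 := lin3 (fun u v w => tens2 u (v * w)) x.
(* tau_s (a1 (x) a2 (x) a3) = a_{s^-1(1)} (x) a_{s^-1(2)} (x) a_{s^-1(3)} *)
Definition tau123 (x : T3) : T3 := lin3 (fun u v w => tens3 w u v) x.
Definition tau132 (x : T3) : T3 := lin3 (fun u v w => tens3 v w u) x.

Variable br : A -> A -> T2.

Definition double_bracket : Prop :=
  (forall a a' b, teq2 (br (a + a') b) (br a b + br a' b)) /\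
  (forall (r : k) a b, teq2 (br (r *: a) b) (r *: br a b)) /\
  (forall a b b', teq2 (br a (b + b')) (br a b + br a b')) /\
  (forall (r : k) a b, teq2 (br a (r *: b)) (r *: br a b)) /\
  (forall a b c, teq2 (br a (b * c)) (bimod2 b (br a c) 1 + bimod2 1 (br a b) c)) /\
  (forall a b, teq2 (br a b) (- swap2 (br b a))).

Definition assoc_bracket (a b : A) : A := mult2 (br a b).

(* {{a, b1 (x) b2}}_L = {{a,b1}} (x) b2 *)
Definition brL (a : A) (x : T2) : T3 :=
  lin2 (fun u v => lin2 (fun p q => tens3 p q v) (br a u)) x.

Definition tri_bracket (a b c : A) : T3 :=
  brL a (br b c) + tau123 (brL b (br c a)) + tau132 (brL c (br a b)).

Definition assoc_bracket_T (a : A) (x : T2) : T2 :=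
  lin2 (fun u v => tens2 (assoc_bracket a u) v + tens2 u (assoc_bracket a v)) x.

End Tensor.

(* Every term of the identity is linear in the tensors {{b,c}}, {{a,b}} and
   {{a,c}}, so it suffices to compare the terms on pure tensors u (x) v, after
   rewriting {{c,a}}, {{c,b}}, {{b,a}} as -{{a,c}}^o, -{{b,c}}^o, -{{a,b}}^o.
   Then {a, u (x) v} = {a,u} (x) v + u (x) {a,v} matches the first summand of
   (m (x) 1){{a,b,c}} and the second of (1 (x) m){{b,a,c}}; the Leibniz rule
   {{b, uv}} = u {{b,v}} + {{b,u}} v matches the other first and second summands;
   and its mirror image {{uv, c}} = - (u {{c,v}} + {{c,u}} v)^o, obtained from
   skew-symmetry, matches the two third summands. *)

From HB Require Import structures.
From mathcomp Require Import all_boot all_order all_algebra.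
From mathcomp Require Import finmap.
From mathcomp.multinomials Require Import monalg.
Set Implicit Arguments. Unset Strict Implicit. Unset Printing Implicit Defensive.
Import GRing.Theory.
Local Open Scope ring_scope.

Section LinearExtension.
Variables (R : nzRingType) (K : choiceType) (W : lmodType R).
Implicit Types (F G : K -> W) (x : {malg R[K]}).

Definition linext F x : W := \sum_(p <- msupp x) x@_p *: F p.

Lemma linextEw F d x : (msupp x `<=` d)%fset ->
  linext F x = \sum_(p <- d) x@_p *: F p.
Proof.
move=> le_xd; rewrite /linext (big_fset_incl _ le_xd) // => p _ /mcoeff_outdom ->.
by rewrite scale0r.
Qed.

Lemma linext_is_linear F : linear (linext F).
Proof.
have linextD x y : linext F (x + y) = linext F x + linext F y.
  pose d := (msupp x `|` msupp y)%fset.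
  rewrite !(@linextEw F d) ?msuppD_le ?fsubsetUl ?fsubsetUr // -big_split /=.
  by apply: eq_bigr => p _; rewrite mcoeffD scalerDl.
move=> r x y; rewrite linextD; congr (_ + _).
rewrite (@linextEw F (msupp x)) ?msuppZ_le // /linext scaler_sumr.
by apply: eq_bigr => p _; rewrite mcoeffZ scalerA.
Qed.

HB.instance Definition _ F :=
  GRing.isLinear.Build R {malg R[K]} W *:%R (linext F) (linext_is_linear F).

Lemma linextU F p : linext F << p >> = F p.
Proof.
by rewrite (@linextEw F [fset p]%fset) ?msuppU_le // big_seq_fset1 mcoeffUU scale1r.
Qed.

Lemma eq_linext F G : F =1 G -> linext F =1 linext G.
Proof. by move=> eqFG x; apply: eq_bigr => p _; rewrite eqFG. Qed.

Lemma linext_subf F G x :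
  linext (fun p => F p - G p) x = linext F x - linext G x.
Proof. by rewrite /linext -sumrB; apply: eq_bigr => p _; rewrite scalerBr. Qed.

End LinearExtension.

Lemma linext_comp (R : nzRingType) (K : choiceType) (W W' : lmodType R)
    (g : {linear W -> W'}) (F : K -> W) x :
  g (linext F x) = linext (fun p => g (F p)) x.
Proof. by rewrite linear_sum; apply: eq_bigr => p _; rewrite linearZ. Qed.

Lemma linext_scalef (R : comNzRingType) (K : choiceType) (W : lmodType R)
    r (F : K -> W) x :
  linext (fun p => r *: F p) x = r *: linext F x.
Proof.
by rewrite /linext scaler_sumr; apply: eq_bigr => p _; rewrite !scalerA mulrC.
Qed.

Lemma linext_id (R : nzRingType) (K : choiceType) (x : {malg R[K]}) :
  linext (fun p => << p >>) x = x.
Proof.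
rewrite [RHS]monalgE; apply: eq_bigr => p _.
by apply/malgP => q; rewrite mcoeffZ !mcoeffU mulr_natr.
Qed.

Section Submodule.
Variables (R : nzRingType) (W : lmodType R) (P : W -> Prop).

Definition submodule := [/\ P 0, forall x y, P x -> P y -> P (x + y)
  & forall (r : R) x, P x -> P (r *: x)].

Definition linear_mod (V : lmodType R) (g : V -> W) :=
  (forall u v, P (g (u + v) - (g u + g v))) /\
  (forall (r : R) u, P (g (r *: u) - r *: g u)).

Hypothesis P_submodule : submodule.

Lemma linext_closed (K : choiceType) (F : K -> W) x :
  (forall p, P (F p)) -> P (linext F x).
Proof.
by case: P_submodule => P0 PD PZ PF; apply: big_ind => // p _; apply: PZ.
Qed.

Lemma linext_congr (K : choiceType) (F G : K -> W) x :
  (forall p, P (F p - G p)) -> P (linext F x - linext G x).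
Proof. by rewrite -linext_subf; apply: linext_closed. Qed.

Lemma linext_linear_mod (K : choiceType) (V : lmodType R) (g : V -> W)
    (F : K -> V) x :
  linear_mod g -> P (g (linext F x) - linext (fun p => g (F p)) x).
Proof.
case: P_submodule => _ PD _ [gD gZ].
apply: (big_ind2 (fun a b => P (g a - b))) => [|a1 b1 a2 b2 h1 h2|p _].
- by have := gZ 0 0; rewrite !scale0r subr0.
- have -> : g (a1 + a2) - (b1 + b2)
      = (g (a1 + a2) - (g a1 + g a2)) + ((g a1 - b1) + (g a2 - b2)).
    by rewrite [_ - b1 + _]addrACA -opprD addrA subrK.
  exact: PD (gD a1 a2) (PD _ _ h1 h2).
- exact: gZ.
Qed.

End Submodule.

Lemma linear_mod_comp (R : nzRingType) (U V W : lmodType R) (P : V -> Prop)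
    (Q : W -> Prop) (g : {linear V -> W}) (h : U -> V) :
  (forall z, P z -> Q (g z)) -> linear_mod P h -> linear_mod Q (fun u => g (h u)).
Proof.
move=> gPQ [hD hZ]; split=> [u v | r u].
  by rewrite -raddfD -raddfB; apply: gPQ.
by rewrite -linearZ -raddfB; apply: gPQ.
Qed.

Lemma linear_mod_linext (R : comNzRingType) (K : choiceType) (V W : lmodType R)
    (P : W -> Prop) (F : K -> V -> W) x :
    submodule P -> (forall p, linear_mod P (F p)) ->
  linear_mod P (fun v => linext (fun p => F p v) x).
Proof.
move=> P_sub F_lin; split=> [u v | r u].
  rewrite opprD addrA -!linext_subf; apply: (linext_closed P_sub) => p.
  by rewrite -addrA -opprD; apply: (F_lin p).1.
rewrite -linext_scalef -linext_subf; apply: (linext_closed P_sub) => p.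
exact: (F_lin p).2.
Qed.

HB.instance Definition _ (k : fieldType) (A : algType k) (W : lmodType k)
    (f : A -> A -> W) :=
  GRing.Linear.copy (lin2 f) (linext (fun p : A * A => f p.1 p.2)).
HB.instance Definition _ (k : fieldType) (A : algType k) (W : lmodType k)
    (f : A -> A -> A -> W) :=
  GRing.Linear.copy (lin3 f) (linext (fun p : A * A * A => f p.1.1 p.1.2 p.2)).
HB.instance Definition _ (k : fieldType) (A : algType k) :=
  GRing.Linear.copy (@swap2 k A) (lin2 (fun u v => tens2 v u)).
HB.instance Definition _ (k : fieldType) (A : algType k) :=
  GRing.Linear.copy (@mult12 k A) (lin3 (fun u v w => tens2 (u * v) w)).
HB.instance Definition _ (k : fieldType) (A : algType k) :=
  GRing.Linear.copy (@mult23 k A) (lin3 (fun u v w => tens2 u (v * w))).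
HB.instance Definition _ (k : fieldType) (A : algType k) :=
  GRing.Linear.copy (@tau123 k A) (lin3 (fun u v w => tens3 w u v)).
HB.instance Definition _ (k : fieldType) (A : algType k) :=
  GRing.Linear.copy (@tau132 k A) (lin3 (fun u v w => tens3 v w u)).
HB.instance Definition _ (k : fieldType) (A : algType k) br a :=
  GRing.Linear.copy (@brL k A br a)
    (lin2 (fun u v => lin2 (fun p q => tens3 p q v) (br a u))).
HB.instance Definition _ (k : fieldType) (A : algType k) br a :=
  GRing.Linear.copy (@assoc_bracket_T k A br a)
    (lin2 (fun u v => tens2 (assoc_bracket br a u) v + tens2 u (assoc_bracket br a v))).

Section Tensors.
Variables (k : fieldType) (A : algType k).
Implicit Types (x y : T2 A) (u v : A).

Lemma lin2U (W : lmodType k) (f : A -> A -> W) u v : lin2 f (tens2 u v) = f u v.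
Proof. exact: linextU. Qed.

Lemma lin3U (W : lmodType k) (f : A -> A -> A -> W) u v w :
  lin3 f (tens3 u v w) = f u v w.
Proof. exact: linextU. Qed.

Lemma swap2U u v : swap2 (tens2 u v) = tens2 v u.
Proof. exact: lin2U. Qed.

Lemma mult12U u v w : mult12 (tens3 u v w) = tens2 (u * v) w.
Proof. exact: lin3U. Qed.

Lemma mult23U u v w : mult23 (tens3 u v w) = tens2 u (v * w).
Proof. exact: lin3U. Qed.

Lemma tau123U u v w : tau123 (tens3 u v w) = tens3 w u v.
Proof. exact: lin3U. Qed.

Lemma tau132U u v w : tau132 (tens3 u v w) = tens3 v w u.
Proof. exact: lin3U. Qed.

Lemma brLU br a u v : brL br a (tens2 u v) = lin2 (fun p q => tens3 p q v) (br a u).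
Proof. exact: lin2U. Qed.

Lemma lin2_comp (W W' : lmodType k) (g : {linear W -> W'}) (f : A -> A -> W) x :
  g (lin2 f x) = lin2 (fun u v => g (f u v)) x.
Proof. exact: linext_comp. Qed.

Lemma lin2_id x : lin2 (fun u v => tens2 u v) x = x.
Proof. by rewrite -[RHS]linext_id; apply: eq_linext => -[]. Qed.

Lemma eq_lin2 (W : lmodType k) (f g : A -> A -> W) x :
  (forall u v, f u v = g u v) -> lin2 f x = lin2 g x.
Proof. by move=> eq_fg; apply: eq_linext => p; apply: eq_fg. Qed.

Lemma null2_submodule : submodule (@null2 k A).
Proof. by split; [exact: null2_0 | exact: null2_add | exact: null2_scale]. Qed.

Lemma null3_submodule : submodule (@null3 k A).
Proof. by split; [exact: null3_0 | exact: null3_add | exact: null3_scale]. Qed.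

Lemma teq2_refl x : teq2 x x.
Proof. by rewrite /teq2 subrr; exact: null2_0. Qed.

Lemma teq2_sym x y : teq2 x y -> teq2 y x.
Proof. by move=> xy; rewrite /teq2 -opprB -scaleN1r; apply: null2_scale. Qed.

Lemma teq2_trans y x z : teq2 x y -> teq2 y z -> teq2 x z.
Proof. by rewrite /teq2 => xy yz; rewrite -[x](subrK y) -addrA; apply: null2_add. Qed.

Lemma teq2D x y x' y' : teq2 x x' -> teq2 y y' -> teq2 (x + y) (x' + y').
Proof. by move=> xx' yy'; rewrite /teq2 opprD addrACA; apply: null2_add. Qed.

Lemma teq2N x x' : teq2 x x' -> teq2 (- x) (- x').
Proof. by move=> xx'; rewrite /teq2 -opprD -scaleN1r; apply: null2_scale. Qed.

Lemma teq2B x y x' y' : teq2 x x' -> teq2 y y' -> teq2 (x - y) (x' - y').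
Proof. by move=> xx' yy'; apply: teq2D => //; apply: teq2N. Qed.

Lemma teq2_lin2 (f g : A -> A -> T2 A) x :
  (forall u v, teq2 (f u v) (g u v)) -> teq2 (lin2 f x) (lin2 g x).
Proof. by move=> fg; apply: (linext_congr null2_submodule) => p; apply: fg. Qed.

Lemma tens2_linear_modl v : linear_mod (@null2 k A) (fun u => tens2 u v).
Proof.
by split=> *; [rewrite opprD addrA; apply: null2_addl | apply: null2_scalel].
Qed.

Lemma tens2_linear_modr u : linear_mod (@null2 k A) (tens2 u).
Proof.
by split=> *; [rewrite opprD addrA; apply: null2_addr | apply: null2_scaler].
Qed.

Lemma tens3_linear_mod1 v w : linear_mod (@null3 k A) (fun u => tens3 u v w).
Proof.
by split=> *; [rewrite opprD addrA; apply: null3_add1 | apply: null3_scale1].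
Qed.

Lemma tens3_linear_mod2 u w : linear_mod (@null3 k A) (fun v => tens3 u v w).
Proof.
by split=> *; [rewrite opprD addrA; apply: null3_add2 | apply: null3_scale2].
Qed.

Lemma tens3_linear_mod3 u v : linear_mod (@null3 k A) (tens3 u v).
Proof.
by split=> *; [rewrite opprD addrA; apply: null3_add3 | apply: null3_scale3].
Qed.

Lemma linear_mod_mulr (W : lmodType k) (P : W -> Prop) (g : A -> W) v :
  linear_mod P g -> linear_mod P (fun u => g (u * v)).
Proof.
by case=> gD gZ; split=> *; [rewrite mulrDl; apply: gD | rewrite -scalerAl; apply: gZ].
Qed.

Lemma linear_mod_mull (W : lmodType k) (P : W -> Prop) (g : A -> W) u :
  linear_mod P g -> linear_mod P (fun v => g (u * v)).
Proof.
by case=> gD gZ; split=> *; [rewrite mulrDr; apply: gD | rewrite -scalerAr; apply: gZ].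
Qed.

Lemma lin2_null (W : lmodType k) (P : W -> Prop) (f : A -> A -> W) :
    submodule P ->
    (forall v, linear_mod P (f^~ v)) -> (forall u, linear_mod P (f u)) ->
  forall x, null2 x -> P (lin2 f x).
Proof.
case=> P0 PD PZ fl fr x; elim=> [u u' v|u v v'|r u v|r u v||y z _ Py _ Pz|r y _ Py].
- by rewrite !raddfB /= !lin2U -addrA -opprD; apply: (fl v).1.
- by rewrite !raddfB /= !lin2U -addrA -opprD; apply: (fr u).1.
- by rewrite raddfB /= linearZ /= !lin2U; apply: (fl v).2.
- by rewrite raddfB /= linearZ /= !lin2U; apply: (fr u).2.
- by rewrite raddf0.
- by rewrite raddfD; apply: PD.
- by rewrite linearZ; apply: PZ.
Qed.

Lemma lin3_null (W : lmodType k) (P : W -> Prop) (f : A -> A -> A -> W) :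
    submodule P ->
    (forall v w, linear_mod P (fun u => f u v w)) ->
    (forall u w, linear_mod P (fun v => f u v w)) ->
    (forall u v, linear_mod P (f u v)) ->
  forall x : T3 A, null3 x -> P (lin3 f x).
Proof.
case=> P0 PD PZ f1 f2 f3 x.
elim=> [u u' v w|u v v' w|u v w w'|r u v w|r u v w|r u v w||y z _ Py _ Pz|r y _ Py].
- by rewrite !raddfB /= !lin3U -addrA -opprD; apply: (f1 v w).1.
- by rewrite !raddfB /= !lin3U -addrA -opprD; apply: (f2 u w).1.
- by rewrite !raddfB /= !lin3U -addrA -opprD; apply: (f3 u v).1.
- by rewrite raddfB /= linearZ /= !lin3U; apply: (f1 v w).2.
- by rewrite raddfB /= linearZ /= !lin3U; apply: (f2 u w).2.
- by rewrite raddfB /= linearZ /= !lin3U; apply: (f3 u v).2.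
- by rewrite raddf0.
- by rewrite raddfD; apply: PD.
- by rewrite linearZ; apply: PZ.
Qed.

Lemma swap2_teq2 x y : teq2 x y -> teq2 (swap2 x) (swap2 y).
Proof.
rewrite /teq2 -[swap2 x - _]raddfB /=.
apply: (lin2_null (f := fun u v => tens2 v u) null2_submodule) => w.
- exact: tens2_linear_modr.
- exact: tens2_linear_modl.
Qed.

Lemma tau123_teq3 (x y : T3 A) : teq3 x y -> teq3 (tau123 x) (tau123 y).
Proof.
rewrite /teq3 -[tau123 x - _]raddfB /=.
apply: (lin3_null (f := fun u v w => tens3 w u v) null3_submodule) => a b.
- exact: tens3_linear_mod2.
- exact: tens3_linear_mod3.
- exact: tens3_linear_mod1.
Qed.

Lemma tau132_teq3 (x y : T3 A) : teq3 x y -> teq3 (tau132 x) (tau132 y).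
Proof.
rewrite /teq3 -[tau132 x - _]raddfB /=.
apply: (lin3_null (f := fun u v w => tens3 v w u) null3_submodule) => a b.
- exact: tens3_linear_mod3.
- exact: tens3_linear_mod1.
- exact: tens3_linear_mod2.
Qed.

Lemma mult12_teq3 (x y : T3 A) : teq3 x y -> teq2 (mult12 x) (mult12 y).
Proof.
rewrite /teq3 /teq2 -[mult12 x - _]raddfB /=.
apply: (lin3_null (f := fun u v w => tens2 (u * v) w) null2_submodule) => a b.
- exact: (linear_mod_mulr a (tens2_linear_modl b)).
- exact: (linear_mod_mull a (tens2_linear_modl b)).
- exact: tens2_linear_modr.
Qed.

Lemma mult23_teq3 (x y : T3 A) : teq3 x y -> teq2 (mult23 x) (mult23 y).
Proof.
rewrite /teq3 /teq2 -[mult23 x - _]raddfB /=.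
apply: (lin3_null (f := fun u v w => tens2 u (v * w)) null2_submodule) => a b.
- exact: tens2_linear_modl.
- exact: (linear_mod_mulr b (tens2_linear_modr a)).
- exact: (linear_mod_mull b (tens2_linear_modr a)).
Qed.

Lemma linear_mod_mult2 (g : A -> T2 A) x :
  linear_mod (@null2 k A) g -> teq2 (g (mult2 x)) (lin2 (fun u v => g (u * v)) x).
Proof. exact: (linext_linear_mod null2_submodule (fun p : A * A => p.1 * p.2) x). Qed.

Lemma teq2_linear (F G : {linear T2 A -> T2 A}) y :
  (forall u v, teq2 (F (tens2 u v)) (G (tens2 u v))) -> teq2 (F y) (G y).
Proof. by move=> FG; rewrite -(lin2_id y) !lin2_comp; apply: teq2_lin2. Qed.

End Tensors.

Section DoubleBracket.
Variables (k : fieldType) (A : algType k) (br : A -> A -> T2 A).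
Implicit Types (a b c u v : A) (x y : T2 A).

Lemma mult12_brLU a u v :
  teq2 (mult12 (brL br a (tens2 u v))) (tens2 (assoc_bracket br a u) v).
Proof.
rewrite brLU lin2_comp /=; under eq_lin2 => p q do rewrite mult12U.
exact: teq2_sym (linear_mod_mult2 (br a u) (tens2_linear_modl v)).
Qed.

Lemma mult23_tau123_brLU a u v :
  teq2 (mult23 (tau123 (brL br a (tens2 v u)))) (tens2 u (assoc_bracket br a v)).
Proof.
rewrite brLU !lin2_comp /=; under eq_lin2 => p q do rewrite tau123U mult23U.
exact: teq2_sym (linear_mod_mult2 (br a v) (tens2_linear_modr u)).
Qed.

Lemma mult23_brLU b u v : mult23 (brL br b (tens2 u v)) = bimod2 1 (br b u) v.
Proof. by rewrite brLU lin2_comp /=; apply: eq_lin2 => p q; rewrite mult23U mul1r. Qed.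

Lemma mult12_tau123_brLU b u v :
  mult12 (tau123 (brL br b (tens2 v u))) = bimod2 u (br b v) 1.
Proof.
by rewrite brLU !lin2_comp /=; apply: eq_lin2 => p q; rewrite tau123U mult12U mulr1.
Qed.

Lemma mult12_tau132_brLU c u v :
  mult12 (tau132 (brL br c (tens2 u v))) = swap2 (bimod2 1 (br c u) v).
Proof.
rewrite brLU !lin2_comp /=; apply: eq_lin2 => p q.
by rewrite tau132U mult12U swap2U mul1r.
Qed.

Lemma mult23_tau132_brLU c u v :
  mult23 (tau132 (brL br c (tens2 v u))) = swap2 (bimod2 u (br c v) 1).
Proof.
rewrite brLU !lin2_comp /=; apply: eq_lin2 => p q.
by rewrite tau132U mult23U swap2U mulr1.
Qed.

Hypothesis br_double : double_bracket br.

Lemma br_linear_modl c : linear_mod (@null2 k A) (br^~ c).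
Proof. by case: br_double => brDl [brZl _]; split=> *; [apply: brDl | apply: brZl]. Qed.

Lemma br_linear_modr a : linear_mod (@null2 k A) (br a).
Proof.
by case: br_double => _ [_ [brDr [brZr _]]]; split=> *; [apply: brDr | apply: brZr].
Qed.

Lemma br_mulr b u v : teq2 (br b (u * v)) (bimod2 u (br b v) 1 + bimod2 1 (br b u) v).
Proof. by case: br_double => _ [_ [_ [_ []]]]. Qed.

Lemma br_skew a b : teq2 (br a b) (- swap2 (br b a)).
Proof. by case: br_double => _ [_ [_ [_ []]]]. Qed.

Lemma br_mull u v c :
  teq2 (br (u * v) c) (- swap2 (bimod2 u (br c v) 1) - swap2 (bimod2 1 (br c u) v)).
Proof.
apply: teq2_trans (br_skew _ _) _.
by rewrite -opprD -raddfD; apply/teq2N/swap2_teq2/br_mulr.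
Qed.

Lemma brL_teq3 a x y : teq2 x y -> teq3 (brL br a x) (brL br a y).
Proof.
rewrite /teq2 /teq3 -[brL br a x - _]raddfB /=.
apply: (lin2_null (f := fun u v => lin2 (fun p q => tens3 p q v) (br a u))
  (@null3_submodule k A)) => [v | u].
- apply: linear_mod_comp (br_linear_modr a) => w /=.
  apply: (lin2_null (f := fun p q => tens3 p q v) (@null3_submodule k A)) => [q | p].
  + exact: tens3_linear_mod1.
  + exact: tens3_linear_mod2.
- exact: (linear_mod_linext (F := fun (p : A * A) => tens3 p.1 p.2) (br a u)
    (@null3_submodule k A) (fun p => tens3_linear_mod3 p.1 p.2)).
Qed.

Lemma assoc_bracket_T_brL a y y' : teq2 y' (- swap2 y) ->
  teq2 (assoc_bracket_T br a y) (mult12 (brL br a y) - mult23 (tau123 (brL br a y'))).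
Proof.
move=> y'E; apply: teq2_trans _
  (teq2B (teq2_refl _) (mult23_teq3 (tau123_teq3 (brL_teq3 a (teq2_sym y'E))))).
rewrite !raddfN /= opprK.
change (teq2 (assoc_bracket_T br a y) (((@mult12 k A \o brL br a)
  \+ (@mult23 k A \o @tau123 k A \o brL br a \o @swap2 k A)) y)).
apply: teq2_linear => u v /=; rewrite /assoc_bracket_T lin2U swap2U.
exact: teq2D (teq2_sym (mult12_brLU a u v)) (teq2_sym (mult23_tau123_brLU a u v)).
Qed.

Lemma br_mult2l_brL c x x' : teq2 x' (- swap2 x) ->
  teq2 (br (mult2 x) c) (mult23 (tau132 (brL br c x')) - mult12 (tau132 (brL br c x))).
Proof.
move=> x'E; apply: teq2_trans _
  (teq2B (mult23_teq3 (tau132_teq3 (brL_teq3 c (teq2_sym x'E)))) (teq2_refl _)).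
apply: teq2_trans (linear_mod_mult2 x (br_linear_modl c)) _; rewrite !raddfN /=.
change (teq2 (lin2 (fun u v => br (u * v) c) x) (((\- (@mult23 k A \o @tau132 k A
  \o brL br c \o @swap2 k A)) \- (@mult12 k A \o @tau132 k A \o brL br c)) x)).
apply: teq2_linear => u v /=; rewrite lin2U swap2U.
by rewrite mult23_tau132_brLU mult12_tau132_brLU; apply: br_mull.
Qed.

Lemma br_mult2r_brL b x x' : teq2 x' (- swap2 x) ->
  teq2 (br b (mult2 x)) (mult23 (brL br b x) - mult12 (tau123 (brL br b x'))).
Proof.
move=> x'E; apply: teq2_trans _
  (teq2B (teq2_refl _) (mult12_teq3 (tau123_teq3 (brL_teq3 b (teq2_sym x'E))))).
apply: teq2_trans (linear_mod_mult2 x (br_linear_modr b)) _; rewrite !raddfN /= opprK.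
change (teq2 (lin2 (fun u v => br b (u * v)) x) (((@mult23 k A \o brL br b)
  \+ (@mult12 k A \o @tau123 k A \o brL br b \o @swap2 k A)) x)).
apply: teq2_linear => u v /=; rewrite lin2U swap2U.
by rewrite mult23_brLU mult12_tau123_brLU addrC; apply: br_mulr.
Qed.

End DoubleBracket.

Unset Implicit Arguments.
Set Strict Implicit.

Theorem proposition2p4p2 (k : fieldType) (hchar : [pchar k] =i pred0)
  (A : algType k) (br : A -> A -> T2 A) (hbr : double_bracket br) (a b c : A) :
  teq2
    (assoc_bracket_T br a (br b c) - br (assoc_bracket br a b) c
       - br b (assoc_bracket br a c))
    (mult12 (tri_bracket br a b c) - mult23 (tri_bracket br b a c)).
Proof.
have L1 := assoc_bracket_T_brL hbr a (br_skew hbr c b).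
have L2 := br_mult2l_brL hbr c (br_skew hbr b a).
have L3 := br_mult2r_brL hbr b (br_skew hbr c a).
rewrite /tri_bracket [mult12 _]raddfD /= [mult12 (_ + _)]raddfD /=.
rewrite [mult23 _]raddfD /= [mult23 (_ + _)]raddfD /=.
apply: teq2_trans (teq2B (teq2B L1 L2) L3) _.
have regroup (r1 r2 r3 s1 s2 s3 : T2 A) :
    r1 - s2 - (s3 - r3) - (s1 - r2) = r1 + r2 + r3 - (s1 + s2 + s3).
  by rewrite !opprB !opprD !addrA (ACl (1*5*3*6*2*4)).
by rewrite regroup; apply: teq2_refl.
Qed.
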